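(* Let $\psi\in\mathcal W^-$, let $Y$ be a measurable space with finite measures $\mu_k$ ($k\in\mathbb N$) and $\mu$, and let $f_k,f$ be bounded functions on $Y$ that are $\mu_k$-measurable and $\mu$-measurable respectively. If $\int_Y\psi(cf_k)\,d\mu_k\to\int_Y\psi(cf)\,d\mu$ for every $c\in[0,\infty)$, then $\|f_k\|_{\psi,\mu_k}\to\|f\|_{\psi,\mu}$.
   Context: $\mathcal W^-$: functions $\psi:[-\infty,\infty]\to[0,\infty]$, even, continuous on $\mathbb R$, $\psi(0)=0$, $\psi(\pm\infty)=\infty$, smooth, concave, strictly increasing on $(0,\infty)$. For a finite measure $\nu$ and measurable $g$, the weak quasi-norm is $\|g\|_{\psi,\nu}=\inf\{N>0:\int_Y\psi(g/N)\,d\nu\le1\}$. *)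

From HB Require Import structures.
From mathcomp Require Import all_boot all_order all_algebra.
From mathcomp Require Import all_classical all_reals all_analysis.
Set Implicit Arguments. Unset Strict Implicit. Unset Printing Implicit Defensive.
Import Order.TTheory GRing.Theory Num.Theory.
Import numFieldNormedType.Exports.
Local Open Scope classical_set_scope.
Local Open Scope ring_scope.

(* The class W^- restricted to the real line (values at +-oo are never used,
   since only bounded functions are plugged in). psi : R -> R, nonnegative. *)
Definition smooth_pos (R : realType) (psi : R -> R) : Prop :=
  forall (n : nat) (x : R), 0 < x -> derivable (iter n (@derive1 R R) psi) x 1.

Definition Wminus (R : realType) (psi : R -> R) : Prop :=
  (forall x, 0 <= psi x) /\
  (forall x, psi (- x) = psi x) /\
  continuous psi /\
  psi 0 = 0 /\
  smooth_pos psi /\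
  (forall x y t, 0 < x -> 0 < y -> 0 <= t -> t <= 1 ->
     t * psi x + (1 - t) * psi y <= psi (t * x + (1 - t) * y)) /\
  (forall x y, 0 < x -> x < y -> psi x < psi y).

(* weak quasi-norm  ||g||_{psi,nu} = inf {N > 0 : \int psi(g/N) dnu <= 1},
   taken in the extended reals (inf of the empty set is +oo). *)
Definition psi_norm (d : measure_display) (Y : measurableType d) (R : realType)
  (psi : R -> R) (nu : {measure set Y -> \bar R}) (g : Y -> R) : \bar R :=
  ereal_inf [set (N%:E)%E | N in [set N : R | 0 < N /\
     (\int[nu]_(y in [set: Y]) (psi (g y / N))%:E <= 1)%E]].

From HB Require Import structures.
From mathcomp Require Import all_boot all_order all_algebra.
From mathcomp Require Import all_classical all_reals all_analysis.
From mathcomp Require Import measurable_realfun.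
Import Order.TTheory GRing.Theory Num.Theory.
Import numFieldNormedType.Exports.
Local Open Scope classical_set_scope.
Local Open Scope ring_scope.
Set Implicit Arguments. Unset Strict Implicit.

(** For fixed [g], the modular [N |-> \int psi (g / N)] is finite and
   nonincreasing on (0, +oo), and it is at most 1 for large [N] because psi is
   continuous at 0 and the measure is finite, so [||g||] is finite.  As psi is
   strictly increasing on [0, +oo), two values of the modular can only agree
   if [g = 0] a.e., where both vanish; hence the modular is < 1 on
   [(||g||, +oo)], while it is > 1 on [(0, ||g||)] by definition of the
   infimum.  With [a = ||f||], the modular of [f] is therefore < 1 at [a + e]
   and > 1 at [a - e]; both strict inequalities pass to the modulars of [f_k]
   for large [k], which pins [||f_k||] into [[a - e, a + e]]. *)

Definition psi_modular (d : measure_display) (Y : measurableType d)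
  (R : realType) (psi : R -> R) (nu : {measure set Y -> \bar R}) (g : Y -> R)
  (N : R) : \bar R :=
  (\int[nu]_(y in [set: Y]) (psi (g y / N))%:E)%E.

Lemma bounded_fun_pos_bound (T : Type) (R : realFieldType) (g : T -> R) :
  bounded_fun g -> exists2 B, 0 < B & forall y, `|g y| <= B.
Proof.
case=> M [_ gM]; exists (`|M| + 1); first by rewrite ltr_pwDr.
by move=> y; apply: gM => //; rewrite (le_lt_trans (ler_norm M)) // ltrDl.
Qed.

Section Wminus.
Variables (R : realType) (psi : R -> R).
Hypothesis psiW : Wminus psi.

Lemma psi_ge0 x : 0 <= psi x.
Proof. by case: psiW. Qed.

Lemma psi_normr x : psi x = psi `|x|.
Proof. by case: psiW => _ [psiN _]; case: ler0P. Qed.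

Lemma psi_continuous : continuous psi.
Proof. by case: psiW => _ [_ []]. Qed.

Lemma psi0 : psi 0 = 0.
Proof. by case: psiW => _ [_ [_ []]]. Qed.

Lemma psi_lt x y : 0 <= x -> x < y -> psi x < psi y.
Proof.
have psi_gt0_lt u v : 0 < u -> u < v -> psi u < psi v.
  by case: psiW => _ [_ [_ [_ [_ [_]]]]]; apply.
rewrite le0r => /orP[/eqP-> y0|]; last exact: psi_gt0_lt.
rewrite psi0 (le_lt_trans (psi_ge0 (y / 2))) // psi_gt0_lt ?divr_gt0 //.
by rewrite ltr_pdivrMr // ltr_pMr // ltr1n.
Qed.

Lemma psi_le x y : 0 <= x -> x <= y -> psi x <= psi y.
Proof. by move=> x0; rewrite le_eqVlt => /predU1P[->//|/(psi_lt x0)/ltW]. Qed.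

Lemma psi_divr x N : 0 < N -> psi (x / N) = psi (`|x| / N).
Proof. by move=> N0; rewrite psi_normr normrM normfV (gtr0_norm N0). Qed.

Lemma psi_divr_le x M N : 0 < M -> M <= N -> psi (x / N) <= psi (x / M).
Proof.
move=> M0 MN; have N0 := lt_le_trans M0 MN.
rewrite psi_divr // [psi (x / M)]psi_divr //.
apply: psi_le; first by rewrite divr_ge0 // ltW.
by apply: ler_wpM2l => //; rewrite lef_pV2 ?posrE.
Qed.

Lemma psi_divr_lt x M N : x != 0 -> 0 < M -> M < N -> psi (x / N) < psi (x / M).
Proof.
move=> x0 M0 MN; have N0 := lt_trans M0 MN.
rewrite psi_divr // [psi (x / M)]psi_divr //.
apply: psi_lt; first by rewrite divr_ge0 // ltW.
by rewrite ltr_pM2l ?normr_gt0 // ltf_pV2.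
Qed.

End Wminus.

Section Modular.
Variables (R : realType) (psi : R -> R).
Hypothesis psiW : Wminus psi.
Variables (d : measure_display) (Y : measurableType d)
  (nu : {finite_measure set Y -> \bar R}) (g : Y -> R).
Hypothesis g_bounded : bounded_fun g.
Hypothesis g_measurable : measurable_fun [set: Y] g.

Local Notation modular := (psi_modular psi nu g).
Local Notation norm := (psi_norm psi nu g).

Lemma measurable_psi_divr N : measurable_fun [set: Y] (fun y => psi (g y / N)).
Proof.
apply: (@measurableT_comp _ _ _ _ _ _ psi).
  exact: continuous_measurable_fun (psi_continuous psiW).
by apply: measurable_funM => //; exact: measurable_cst.
Qed.

Lemma measurable_EFin_psi_divr N :
  measurable_fun [set: Y] (fun y => (psi (g y / N))%:E).
Proof. exact/measurable_EFinP/measurable_psi_divr. Qed.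

Lemma integrable_psi_divr N : 0 < N ->
  nu.-integrable [set: Y] (EFin \o (fun y => psi (g y / N))).
Proof.
move=> N0; have [B B0 gB] := bounded_fun_pos_bound g_bounded.
apply: measurable_bounded_integrable => //.
- exact/fin_num_fun_lty/fin_num_measure.
- exact: measurable_psi_divr.
exists (psi (B / N)); split; first exact: num_real.
move=> b Bb y _ /=; rewrite ger0_norm ?(psi_ge0 psiW) //.
apply/ltW/(le_lt_trans _ Bb); rewrite (psi_divr psiW) //.
apply: (psi_le psiW); first by rewrite divr_ge0 // ltW.
by rewrite ler_pM2r ?invr_gt0.
Qed.

Lemma psi_modular_fin_num N : 0 < N -> modular N \is a fin_num.
Proof. by move=> N0; apply/integrable_fin_num/integrable_psi_divr. Qed.

Lemma le_psi_modular M N : 0 < M -> M <= N -> (modular N <= modular M)%E.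
Proof.
move=> M0 MN; apply: ge0_le_integral => //; try exact: measurable_EFin_psi_divr.
- by move=> y _; rewrite lee_fin (psi_ge0 psiW).
- by move=> y _; rewrite lee_fin (psi_divr_le psiW).
Qed.

Lemma lt_psi_modular M N :
  0 < M -> M < N -> modular N != 0%E -> (modular N < modular M)%E.
Proof.
move=> M0 MN; have N0 := lt_trans M0 MN.
rewrite lt_neqAle le_psi_modular ?ltW // andbT; apply: contra => /eqP IMN.
pose h y := psi (g y / M) - psi (g y / N).
have h_ae : ae_eq nu [set: Y] (EFin \o h) (cst 0%E).
  apply/ae_eq_integral_abs => //.
    by apply/measurable_EFinP/measurable_funB; exact: measurable_psi_divr.
  rewrite (eq_integral (fun y => (psi (g y / M))%:E - (psi (g y / N))%:E))%E.
    rewrite integralB_EFin //; try exact: integrable_psi_divr.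
    by rewrite -/(modular M) -/(modular N) IMN subee // psi_modular_fin_num.
  by move=> y _; rewrite gee0_abs // lee_fin subr_ge0 (psi_divr_le psiW) // ltW.
apply/eqP; rewrite -(integral0 nu [set: Y]).
apply: ae_eq_integral => //; first exact: measurable_EFin_psi_divr.
apply: filterS h_ae => y /(_ I) /= /eqP; rewrite eqe subr_eq0 => /eqP psiMN _.
have [->|gy0] := eqVneq (g y) 0; first by rewrite mul0r (psi0 psiW).
by have := psi_divr_lt psiW gy0 M0 MN; rewrite psiMN ltxx.
Qed.

Lemma psi_modular_lt1 M N :
  0 < M -> M < N -> (modular M <= 1)%E -> (modular N < 1)%E.
Proof.
move=> M0 MN IM1; have [->|IN0] := eqVneq (modular N) 0%E; first exact: lte01.
exact: lt_le_trans (lt_psi_modular M0 MN IN0) IM1.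
Qed.

Lemma exists_psi_modular_le1 : exists2 N, 0 < N & (modular N <= 1)%E.
Proof.
have [B B0 gB] := bounded_fun_pos_bound g_bounded.
set m := fine (nu [set: Y]).
have m0 : 0 <= m by apply: fine_ge0; exact: measure_ge0.
have psi_cvg0 : psi t @[t --> 0] --> 0.
  by rewrite -[X in _ --> X](psi0 psiW); exact: psi_continuous.
have psi_small : \forall t \near 0, psi t < (m + 1)^-1.
  by apply: cvgr_lt psi_cvg0 _ _; rewrite invr_gt0 ltr_wpDl.
have [t t0 psit] : exists2 t, 0 < t & psi t < (m + 1)^-1.
  move: psi_small => /nbhs_ballP[δ δ0 psiδ].
  exists (δ / 2); first by rewrite divr_gt0.
  apply: psiδ; rewrite /ball /= sub0r normrN gtr0_norm ?divr_gt0 //.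
  by rewrite ltr_pdivrMr // ltr_pMr // ltr1n.
exists (B / t); first by rewrite divr_gt0.
apply: (@le_trans _ _ (\int[nu]_(y in [set: Y]) (cst (psi t)%:E) y)%E).
  apply: ge0_le_integral => //.
  - by move=> y _; rewrite lee_fin (psi_ge0 psiW).
  - exact: measurable_EFin_psi_divr.
  - move=> y _; rewrite lee_fin (psi_divr psiW) ?divr_gt0 //.
    apply: (psi_le psiW); first by rewrite divr_ge0 // ltW ?divr_gt0.
    by rewrite invf_div mulrA ler_pdivrMr // mulrC ler_pM2l.
rewrite integral_cst // -[X in (_ * X)%E]fineK ?fin_num_measure //.
rewrite -EFinM lee_fin.
apply: le_trans (ler_wpM2r m0 (ltW psit)) _.
by rewrite mulrC ler_pdivrMr ?ltr_wpDl // mul1r lerDl.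
Qed.

Lemma psi_norm_le N : 0 < N -> (modular N <= 1)%E -> (norm <= N%:E)%E.
Proof. by move=> N0 IN; apply: ereal_inf_lbound; exists N. Qed.

Lemma psi_norm_ge0 : (0 <= norm)%E.
Proof. by apply/ereal_infP => _ [N [N0 _] <-]; rewrite lee_fin ltW. Qed.

Lemma psi_norm_ge N : 0 < N -> (1 < modular N)%E -> (N%:E <= norm)%E.
Proof.
move=> N0 IN; apply/ereal_infP => _ [M [M0 IM] <-]; rewrite lee_fin leNgt.
apply/negP => MN; have := le_trans (le_psi_modular M0 (ltW MN)) IM.
by rewrite leNgt IN.
Qed.

Lemma psi_modular_lt1_of_norm_lt N :
  0 < N -> (norm < N%:E)%E -> (modular N < 1)%E.
Proof.
move=> N0 /ereal_inf_ltP[_ [M [M0 IM] <-]]; rewrite lte_fin => MN.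
exact: psi_modular_lt1 M0 MN IM.
Qed.

Lemma psi_modular_gt1_of_lt_norm N :
  0 < N -> (N%:E < norm)%E -> (1 < modular N)%E.
Proof.
move=> N0 Nnorm; rewrite ltNge; apply: contraTN Nnorm => IN.
by rewrite -leNgt psi_norm_le.
Qed.

Lemma psi_norm_fin_num : norm \is a fin_num.
Proof.
have [N N0 IN] := exists_psi_modular_le1.
rewrite ge0_fin_numE ?psi_norm_ge0 //.
exact: le_lt_trans (psi_norm_le N0 IN) (ltry N).
Qed.

End Modular.

Section ModularConvergence.
Variables (R : realType) (psi : R -> R).
Hypothesis psiW : Wminus psi.
Variables (d : measure_display) (Y : measurableType d)
  (nu_ : nat -> {finite_measure set Y -> \bar R}) (g_ : nat -> Y -> R)
  (l : \bar R) (N : R).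
Hypothesis N_gt0 : 0 < N.
Hypothesis modular_cvg : psi_modular psi (nu_ k) (g_ k) N @[k --> \oo] --> l.

Lemma psi_norm_le_near : (l < 1)%E ->
  \forall k \near \oo, (psi_norm psi (nu_ k) (g_ k) <= N%:E)%E.
Proof.
move=> l_lt1.
have : \forall k \near \oo, (psi_modular psi (nu_ k) (g_ k) N < 1)%E.
  exact: modular_cvg (open_ereal_lt' l_lt1).
by apply: filterS => k /ltW; exact: psi_norm_le.
Qed.

Lemma psi_norm_ge_near : (forall k, measurable_fun [set: Y] (g_ k)) ->
  (1 < l)%E -> \forall k \near \oo, (N%:E <= psi_norm psi (nu_ k) (g_ k))%E.
Proof.
move=> g_measurable l_gt1.
have : \forall k \near \oo, (1 < psi_modular psi (nu_ k) (g_ k) N)%E.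
  exact: modular_cvg (open_ereal_gt' l_gt1).
by apply: filterS => k; exact: psi_norm_ge.
Qed.

End ModularConvergence.

Theorem lemma2p7 (R : realType) (psi : R -> R) (d : measure_display)
  (Y : measurableType d) (mu_ : nat -> {finite_measure set Y -> \bar R})
  (mu : {finite_measure set Y -> \bar R}) (f_ : nat -> Y -> R) (f : Y -> R) :
  Wminus psi ->
  (forall k, bounded_fun (f_ k)) -> bounded_fun f ->
  (forall k, measurable_fun [set: Y] (f_ k)) -> measurable_fun [set: Y] f ->
  (forall c : R, 0 <= c ->
     ((fun k => \int[mu_ k]_(y in [set: Y]) (psi (c * f_ k y))%:E) @ \oo
       --> \int[mu]_(y in [set: Y]) (psi (c * f y))%:E)%E) ->
  (fun k => psi_norm psi (mu_ k) (f_ k)) @ \oo --> psi_norm psi mu f.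
Proof.
move=> psiW fk_bounded f_bounded fk_measurable f_measurable integral_cvg.
have modular_cvg N : 0 < N ->
    psi_modular psi (mu_ k) (f_ k) N @[k --> \oo] --> psi_modular psi mu f N.
  move=> N0; rewrite /psi_modular.
  under eq_fun do under eq_integral do rewrite mulrC.
  under eq_integral do rewrite mulrC.
  by apply: integral_cvg; rewrite invr_ge0 ltW.
set a := fine (psi_norm psi mu f).
have norm_f : psi_norm psi mu f = a%:E by rewrite fineK ?psi_norm_fin_num.
have a_ge0 : 0 <= a by rewrite -lee_fin -norm_f psi_norm_ge0.
rewrite norm_f; apply/fine_cvgP; split.
  by apply: nearW => k; exact: psi_norm_fin_num.
apply/cvgrPdist_le => e e0.
have upper : \forall k \near \oo, (psi_norm psi (mu_ k) (f_ k) <= (a + e)%:E)%E.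
  have ae0 : 0 < a + e by rewrite ltr_wpDl.
  apply: (psi_norm_le_near ae0 (modular_cvg _ ae0)).
  apply: (psi_modular_lt1_of_norm_lt psiW f_bounded f_measurable ae0).
  by rewrite norm_f lte_fin ltrDl.
have lower : \forall k \near \oo, ((a - e)%:E <= psi_norm psi (mu_ k) (f_ k))%E.
  have [ae0|ae0] := lerP (a - e) 0.
    apply: nearW => k.
    by rewrite (le_trans _ (psi_norm_ge0 psi (mu_ k) (f_ k))) ?lee_fin.
  apply: (psi_norm_ge_near psiW ae0 (modular_cvg _ ae0) fk_measurable).
  apply: (psi_modular_gt1_of_lt_norm ae0).
  by rewrite norm_f lte_fin gtrBl.
apply: filterS2 lower upper => k lo up /=.
rewrite ler_distlC -!lee_fin fineK ?lo ?up //.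
exact: psi_norm_fin_num.
Qed.
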